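(* Let $r\in\mathbb N_{>0}$, let $\lambda\in\pi\mathbb N_{>0}$ or $\lambda\in\lambda_0+2\pi\mathbb Z$ with $\lambda_0\in\{\pi/3,\pi/2,2\pi/3\}$, and choose $\mu,\nu\in\mathbb R$ and $\xi_0=x_0+iy_0$ such that: (i) if $\lambda\in\pi\mathbb N_{>0}$: $\nu>0$ and $x_0,y_0\in\frac1r\mathbb Z$; (ii) if $\lambda\in\pi/2+2\pi\mathbb Z$: $\mu+i\nu=i$ and $x_0,y_0\in\frac1r\mathbb Z$; (iii) if $\lambda\in\pi/3+2\pi\mathbb Z$: $\mu+i\nu=e^{i\pi/3}$, $x_0\in\frac12+\frac1r\mathbb Z$, $y_0\in\frac1r\mathbb Z$; (iv) if $\lambda\in 2\pi/3+2\pi\mathbb Z$: $\mu+i\nu=e^{i\pi/3}$, $x_0\in\frac1r\mathbb Z$, $y_0\in\frac12+\frac1r\mathbb Z$. Then for every $z\in\mathbb R$ the elements $l_1=(\tfrac1{\sqrt\nu},0,0)$, $l_2=(-\tfrac{\mu}{\sqrt\nu}+i\sqrt\nu,0,0)$, $l_3=(0,\tfrac1r,0)$, $l_4=(\tfrac{x_0}{\sqrt\nu}-\tfrac{\mu y_0}{\sqrt\nu}+i\sqrt\nu y_0,\,z,\,\lambda)$ generate a lattice in $\mathrm{Osc}_1$.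
   Context: $\mathrm{Osc}_1$ is the set $\mathbb C\times\mathbb R\times\mathbb R$ with multiplication $(\xi_1,z_1,t_1)(\xi_2,z_2,t_2)=(\xi_1+e^{it_1}\xi_2,\ z_1+z_2+\tfrac12\operatorname{Im}(\overline{\xi_1}e^{it_1}\xi_2),\ t_1+t_2)$. A lattice is a discrete subgroup with finite-volume (equivalently, since the group is solvable, compact) quotient. *)

From Stdlib Require Import Reals Lra ZArith.
Open Scope R_scope.

(* An element (xi, z, t) of Osc_1 = C x R x R, with xi = xr + i xi_im,
   is represented as the 4-tuple (xr, xi_im, z, t). *)
Record Osc := mkOsc { o_re : R; o_im : R; o_z : R; o_t : R }.

(* e^{it} * (a + i b) *)
Definition rot_re (t a b : R) : R := cos t * a - sin t * b.
Definition rot_im (t a b : R) : R := sin t * a + cos t * b.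

(* (xi1,z1,t1)(xi2,z2,t2) =
   (xi1 + e^{it1} xi2, z1 + z2 + 1/2 Im(conj(xi1) e^{it1} xi2), t1 + t2).
   With w = e^{it1} xi2 = wr + i wi and xi1 = a1 + i b1,
   Im(conj(xi1) w) = a1 * wi - b1 * wr. *)
Definition osc_mul (g h : Osc) : Osc :=
  let wr := rot_re (o_t g) (o_re h) (o_im h) in
  let wi := rot_im (o_t g) (o_re h) (o_im h) in
  mkOsc (o_re g + wr) (o_im g + wi)
        (o_z g + o_z h + / 2 * (o_re g * wi - o_im g * wr))
        (o_t g + o_t h).

Definition osc_one : Osc := mkOsc 0 0 0 0.

Definition osc_inv (g : Osc) : Osc :=
  mkOsc (- rot_re (- o_t g) (o_re g) (o_im g))
        (- rot_im (- o_t g) (o_re g) (o_im g))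
        (- o_z g) (- o_t g).

Definition osc_dist (g h : Osc) : R :=
  sqrt ((o_re g - o_re h)^2 + (o_im g - o_im h)^2
        + (o_z g - o_z h)^2 + (o_t g - o_t h)^2).

Inductive gen_by (S : list Osc) : Osc -> Prop :=
  | gen_base : forall g, List.In g S -> gen_by S g
  | gen_one : gen_by S osc_one
  | gen_mul : forall g h, gen_by S g -> gen_by S h -> gen_by S (osc_mul g h)
  | gen_inv : forall g, gen_by S g -> gen_by S (osc_inv g).

Definition discrete (Gamma : Osc -> Prop) : Prop :=
  forall g, Gamma g -> exists eps, eps > 0 /\
    forall h, Gamma h -> osc_dist h g < eps -> h = g.

(* G / Gamma compact: there is a compact (closed ball) K with G = K Gamma *)
Definition cocompact (Gamma : Osc -> Prop) : Prop :=
  exists M, forall g, exists k gam,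
    osc_dist k osc_one <= M /\ Gamma gam /\ g = osc_mul k gam.

Definition is_lattice (Gamma : Osc -> Prop) : Prop :=
  discrete Gamma /\ cocompact Gamma.

Definition in_frac_Z (r : nat) (q : R) : Prop :=
  exists a : Z, q = IZR a / INR r.

(* The group Gamma generated by l1, ..., l4 lies in the set of points (xi, z, t) with
   t in lam Z, xi in (1/2r) Lambda for the plane lattice Lambda = Z l1 + Z l2, and z
   in m z + (1/8r^2) Z when t = m lam.  The hypotheses on lam say precisely that the
   rotation by lam preserves Lambda (any Lambda for lam in pi Z, the square lattice for
   lam = pi/2, the hexagonal one for lam = pi/3, 2pi/3 mod 2pi), so this set is closed
   under the group law; since Im (conj l1 l2) = 1 the z-cocycle stays in (1/8r^2) Z.
   The set is uniformly discrete, hence so is Gamma.  Conversely, multiplying an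
   arbitrary element on the right by a power of l4, then by an element of Lambda, then
   by a power of l3 brings successively t, xi and z into a fixed bounded box, so Gamma
   is cocompact. *)

From Stdlib Require Import Reals ZArith Lra Lia Nsatz Psatz.
Open Scope R_scope.

Lemma osc_mul_assoc g h k : osc_mul (osc_mul g h) k = osc_mul g (osc_mul h k).
Proof.
  destruct g as [a1 b1 z1 t1], h as [a2 b2 z2 t2], k as [a3 b3 z3 t3].
  unfold osc_mul, rot_re, rot_im; simpl; f_equal; rewrite ?cos_plus, ?sin_plus; try ring.
  pose proof (sin2_cos2 t1) as H. unfold Rsqr in H. nsatz.
Qed.

Lemma osc_mulV g : osc_mul g (osc_inv g) = osc_one.
Proof.
  destruct g as [a b z t]. unfold osc_mul, osc_inv, osc_one, rot_re, rot_im; simpl.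
  rewrite cos_neg, sin_neg. pose proof (sin2_cos2 t) as H. unfold Rsqr in H.
  f_equal; try ring; nsatz.
Qed.

Lemma osc_mul1 g : osc_mul g osc_one = g.
Proof. destruct g. unfold osc_mul, osc_one, rot_re, rot_im; simpl; f_equal; ring. Qed.

Lemma osc_mulK h g : osc_mul (osc_mul g h) (osc_inv h) = g.
Proof. now rewrite osc_mul_assoc, osc_mulV, osc_mul1. Qed.

Lemma rot_re_plus t1 t2 x y :
  rot_re (t1 + t2) x y = rot_re t1 (rot_re t2 x y) (rot_im t2 x y).
Proof. unfold rot_re, rot_im. rewrite cos_plus, sin_plus. ring. Qed.

Lemma rot_im_plus t1 t2 x y :
  rot_im (t1 + t2) x y = rot_im t1 (rot_re t2 x y) (rot_im t2 x y).
Proof. unfold rot_re, rot_im. rewrite cos_plus, sin_plus. ring. Qed.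

Lemma rot_re_0 x y : rot_re 0 x y = x.
Proof. unfold rot_re. rewrite cos_0, sin_0. ring. Qed.

Lemma rot_im_0 x y : rot_im 0 x y = y.
Proof. unfold rot_im. rewrite cos_0, sin_0. ring. Qed.

Lemma rot_re_scale t c x y : rot_re t (c * x) (c * y) = c * rot_re t x y.
Proof. unfold rot_re. ring. Qed.

Lemma rot_im_scale t c x y : rot_im t (c * x) (c * y) = c * rot_im t x y.
Proof. unfold rot_im. ring. Qed.

Lemma Rabs_lin_le u v x y :
  Rabs u <= 1 -> Rabs v <= 1 -> Rabs (u * x + v * y) <= Rabs x + Rabs y.
Proof.
  intros Hu Hv. eapply Rle_trans; [apply Rabs_triang|]. rewrite !Rabs_mult.
  pose proof (Rabs_pos x); pose proof (Rabs_pos y). nra.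
Qed.

Lemma Rabs_rot_re_le t x y : Rabs (rot_re t x y) <= Rabs x + Rabs y.
Proof.
  unfold rot_re. replace (cos t * x - sin t * y) with (cos t * x + - sin t * y) by ring.
  apply Rabs_lin_le; rewrite ?Rabs_Ropp; apply Rabs_le; [apply COS_bound | apply SIN_bound].
Qed.

Lemma Rabs_rot_im_le t x y : Rabs (rot_im t x y) <= Rabs x + Rabs y.
Proof. apply Rabs_lin_le; apply Rabs_le; [apply SIN_bound | apply COS_bound]. Qed.

(* [A l1 + B l2] for [l1 = 1/s] and [l2 = -mu/s + i s]; with [s = sqrt nu] these
   are the first two generators of the statement. *)
Definition lat_re (mu s : R) (A B : Z) : R := (IZR A - mu * IZR B) / s.
Definition lat_im (s : R) (B : Z) : R := IZR B * s.

Definition on_lattice (mu s x y : R) : Prop :=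
  exists A B : Z, x = lat_re mu s A B /\ y = lat_im s B.

Definition rot_stable (mu s t : R) : Prop :=
  forall x y, on_lattice mu s x y -> on_lattice mu s (rot_re t x y) (rot_im t x y).

Section Lattice.
Variables (mu s : R).
Hypothesis s_neq0 : s <> 0.

Lemma on_lattice_add x1 y1 x2 y2 :
  on_lattice mu s x1 y1 -> on_lattice mu s x2 y2 ->
  on_lattice mu s (x1 + x2) (y1 + y2).
Proof.
  intros [A1 [B1 [-> ->]]] [A2 [B2 [-> ->]]]. exists (A1 + A2)%Z, (B1 + B2)%Z.
  unfold lat_re, lat_im. rewrite !plus_IZR. split; field; auto.
Qed.

Lemma on_lattice_opp x y : on_lattice mu s x y -> on_lattice mu s (- x) (- y).
Proof.
  intros [A [B [-> ->]]]. exists (- A)%Z, (- B)%Z.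
  unfold lat_re, lat_im. rewrite !opp_IZR. split; field; auto.
Qed.

(* [Im (conj l1 * l2) = 1]. *)
Lemma on_lattice_area x1 y1 x2 y2 :
  on_lattice mu s x1 y1 -> on_lattice mu s x2 y2 ->
  exists k : Z, x1 * y2 - y1 * x2 = IZR k.
Proof.
  intros [A1 [B1 [-> ->]]] [A2 [B2 [-> ->]]]. exists (A1 * B2 - B1 * A2)%Z.
  unfold lat_re, lat_im. rewrite minus_IZR, !mult_IZR. field; auto.
Qed.

Lemma rot_stable_of_basis t (a1 b1 a2 b2 : Z) :
  rot_re t (/ s) 0 = lat_re mu s a1 b1 -> rot_im t (/ s) 0 = lat_im s b1 ->
  rot_re t (- mu / s) s = lat_re mu s a2 b2 -> rot_im t (- mu / s) s = lat_im s b2 ->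
  rot_stable mu s t.
Proof.
  intros H1 H2 H3 H4 x y [A [B [-> ->]]].
  exists (A * a1 + B * a2)%Z, (A * b1 + B * b2)%Z.
  unfold lat_re, lat_im in *. rewrite !plus_IZR, !mult_IZR. split.
  - transitivity (IZR A * rot_re t (/ s) 0 + IZR B * rot_re t (- mu / s) s).
    + unfold rot_re. field; auto.
    + rewrite H1, H3. field; auto.
  - transitivity (IZR A * rot_im t (/ s) 0 + IZR B * rot_im t (- mu / s) s).
    + unfold rot_im. field; auto.
    + rewrite H2, H4. ring.
Qed.

Lemma rot_stable_plus t1 t2 :
  rot_stable mu s t1 -> rot_stable mu s t2 -> rot_stable mu s (t1 + t2).
Proof.
  intros H1 H2 x y Hxy. rewrite rot_re_plus, rot_im_plus. auto.
Qed.

Lemma rot_stable_Zmul t :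
  rot_stable mu s t -> rot_stable mu s (- t) -> forall m : Z, rot_stable mu s (IZR m * t).
Proof.
  intros Hp Hm m. induction m using Z.peano_ind.
  - intros x y Hxy. rewrite Rmult_0_l, rot_re_0, rot_im_0. exact Hxy.
  - rewrite succ_IZR, Rplus_comm, Rmult_plus_distr_r, Rmult_1_l. now apply rot_stable_plus.
  - rewrite <- Z.sub_1_r, minus_IZR. replace ((IZR m - 1) * t) with (- t + IZR m * t) by ring.
    now apply rot_stable_plus.
Qed.

Lemma rot_stable_sin_eq_0 t : sin t = 0 -> rot_stable mu s t.
Proof.
  intro Hs. destruct (Rsqr_eq (cos t) 1) as [Hc | Hc].
  { pose proof (sin2_cos2 t) as H. unfold Rsqr in *. rewrite Hs in H. lra. }
  - apply (rot_stable_of_basis t 1 0 0 1); unfold rot_re, rot_im, lat_re, lat_im;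
      rewrite Hs, Hc; field; auto.
  - apply (rot_stable_of_basis t (-1) 0 0 (-1)); unfold rot_re, rot_im, lat_re, lat_im;
      rewrite Hs, Hc; field; auto.
Qed.

End Lattice.

Lemma rot_stable_square t : cos t = 0 -> rot_stable 0 1 t.
Proof.
  intro Hc. destruct (Rsqr_eq (sin t) 1) as [Hs | Hs].
  { pose proof (sin2_cos2 t) as H. unfold Rsqr in *. rewrite Hc in H. lra. }
  - apply (rot_stable_of_basis 0 1 R1_neq_R0 t 0 1 (-1) 0); unfold rot_re, rot_im, lat_re, lat_im;
      rewrite Hs, Hc; field.
  - apply (rot_stable_of_basis 0 1 R1_neq_R0 t 0 (-1) 1 0); unfold rot_re, rot_im, lat_re, lat_im;
      rewrite Hs, Hc; field.
Qed.

Lemma sqrt_sin_PI3_pow4 : sqrt (sin (PI / 3)) ^ 4 = 3 / 4.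
Proof.
  assert (H3 : sqrt 3 * sqrt 3 = 3) by (apply sqrt_sqrt; lra).
  rewrite sin_PI3. replace 4%nat with (2 * 2)%nat by reflexivity.
  assert (0 < sqrt 3) by (apply sqrt_lt_R0; lra).
  rewrite pow_mult, pow2_sqrt by lra. nra.
Qed.

Lemma rot_stable_hex t :
  cos t = 1 / 2 \/ cos t = - (1 / 2) -> rot_stable (cos (PI / 3)) (sqrt (sin (PI / 3))) t.
Proof.
  intro Hc. rewrite cos_PI3.
  set (s := sqrt (sin (PI / 3))).
  assert (Hs4 : s ^ 4 = 3 / 4) by apply sqrt_sin_PI3_pow4.
  assert (Hs0 : s <> 0) by (intro H0; rewrite H0 in Hs4; lra).
  assert (Hsin : sin t = s ^ 2 \/ sin t = - s ^ 2).
  { apply Rsqr_eq. pose proof (sin2_cos2 t) as H. unfold Rsqr in *. destruct Hc as [Hc|Hc];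
      rewrite Hc in H; nra. }
  (* Lattice coordinates of the images of l1, l2 under the rotations by
     pi/3, -pi/3, 2pi/3 and -2pi/3. *)
  destruct Hc as [Hc|Hc], Hsin as [Hs|Hs];
    [ apply (rot_stable_of_basis _ _ Hs0 t 1 1 (-1) 0)
    | apply (rot_stable_of_basis _ _ Hs0 t 0 (-1) 1 1)
    | apply (rot_stable_of_basis _ _ Hs0 t 0 1 (-1) (-1))
    | apply (rot_stable_of_basis _ _ Hs0 t (-1) (-1) 1 0) ];
    unfold rot_re, rot_im, lat_re, lat_im; rewrite Hs, Hc.
  all: try (field; auto).
  all: apply (Rmult_eq_reg_r s); auto; field_simplify; auto; rewrite Hs4; field.
Qed.

Lemma IZR_eq_of_close (k k' : Z) c : 0 < c -> Rabs ((IZR k' - IZR k) * c) < c -> k' = k.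
Proof.
  intros Hc H. rewrite Rabs_mult, (Rabs_pos_eq c) in H by lra.
  assert (H1 : Rabs (IZR (k' - k)) < 1) by (rewrite minus_IZR; nra).
  apply Rabs_def2 in H1. destruct H1 as [H1 H2].
  apply lt_IZR in H1. apply (lt_IZR (-1)) in H2. lia.
Qed.

Lemma Rabs_le_osc_dist g h :
  Rabs (o_re h - o_re g) <= osc_dist h g /\ Rabs (o_im h - o_im g) <= osc_dist h g /\
  Rabs (o_z h - o_z g) <= osc_dist h g /\ Rabs (o_t h - o_t g) <= osc_dist h g.
Proof.
  unfold osc_dist.
  pose proof (pow2_ge_0 (o_re h - o_re g)); pose proof (pow2_ge_0 (o_im h - o_im g)).
  pose proof (pow2_ge_0 (o_z h - o_z g)); pose proof (pow2_ge_0 (o_t h - o_t g)).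
  repeat split; rewrite <- sqrt_Rsqr_abs; apply sqrt_le_1_alt; unfold Rsqr; lra.
Qed.

Definition osc_grid (D : Z) (mu s lam z0 : R) (g : Osc) : Prop :=
  exists m C : Z, o_t g = IZR m * lam /\
    on_lattice mu s (IZR D * o_re g) (IZR D * o_im g) /\
    o_z g = IZR m * z0 + IZR C / (2 * IZR D ^ 2).

Section Grid.
Variables (D : Z) (mu s lam z0 : R).
Hypotheses (D_gt0 : (0 < D)%Z) (s_gt0 : 0 < s).

Let D_neq0 : IZR D <> 0.
Proof. apply not_0_IZR. lia. Qed.

Let s_neq0 : s <> 0.
Proof. lra. Qed.

Section Closure.
Hypothesis rot_stable_lam : forall m : Z, rot_stable mu s (IZR m * lam).

Lemma osc_grid_mul g h :
  osc_grid D mu s lam z0 g -> osc_grid D mu s lam z0 h ->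
  osc_grid D mu s lam z0 (osc_mul g h).
Proof.
  intros [m1 [C1 [Ht1 [HL1 Hz1]]]] [m2 [C2 [Ht2 [HL2 Hz2]]]].
  set (wr := rot_re (o_t g) (o_re h) (o_im h)).
  set (wi := rot_im (o_t g) (o_re h) (o_im h)).
  assert (HLw : on_lattice mu s (IZR D * wr) (IZR D * wi)).
  { unfold wr, wi. rewrite <- rot_re_scale, <- rot_im_scale, Ht1. now apply rot_stable_lam. }
  destruct (on_lattice_area _ _ s_neq0 _ _ _ _ HL1 HLw) as [k Hk].
  exists (m1 + m2)%Z, (C1 + C2 + k)%Z. cbn [osc_mul o_t o_re o_im o_z]. fold wr wi.
  rewrite !plus_IZR. split; [|split].
  - rewrite Ht1, Ht2. ring.
  - rewrite !Rmult_plus_distr_l. now apply on_lattice_add.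
  - replace (o_re g * wi - o_im g * wr)
      with (((IZR D * o_re g) * (IZR D * wi) - (IZR D * o_im g) * (IZR D * wr)) / IZR D ^ 2)
      by (field; auto).
    rewrite Hk, Hz1, Hz2. field; auto.
Qed.

Lemma osc_grid_inv g : osc_grid D mu s lam z0 g -> osc_grid D mu s lam z0 (osc_inv g).
Proof.
  intros [m [C [Ht [HL Hz]]]].
  assert (HLw : on_lattice mu s (IZR D * rot_re (- o_t g) (o_re g) (o_im g))
                                (IZR D * rot_im (- o_t g) (o_re g) (o_im g))).
  { rewrite <- rot_re_scale, <- rot_im_scale, Ht, Ropp_mult_distr_l, <- opp_IZR.
    now apply rot_stable_lam. }
  exists (- m)%Z, (- C)%Z. cbn [osc_inv o_t o_re o_im o_z]. rewrite !opp_IZR.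
  split; [|split].
  - rewrite Ht. ring.
  - rewrite <- !Ropp_mult_distr_r. now apply on_lattice_opp.
  - rewrite Hz. field; auto.
Qed.

Lemma gen_by_osc_grid (S : list Osc) :
  (forall g, List.In g S -> osc_grid D mu s lam z0 g) ->
  forall g, gen_by S g -> osc_grid D mu s lam z0 g.
Proof.
  intros HS g Hg. induction Hg as [g Hin | | g h _ IHg _ IHh | g _ IHg].
  - auto.
  - exists 0%Z, 0%Z. cbn. split; [ring|]. split; [|field; auto].
    exists 0%Z, 0%Z. unfold lat_re, lat_im. split; field; auto.
  - now apply osc_grid_mul.
  - now apply osc_grid_inv.
Qed.

End Closure.

Lemma osc_grid_eq g h :
  osc_grid D mu s lam z0 g -> osc_grid D mu s lam z0 h ->
  Rabs (o_t h - o_t g) < Rabs lam -> Rabs (o_im h - o_im g) < s / IZR D ->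
  Rabs (o_re h - o_re g) < / (IZR D * s) -> Rabs (o_z h - o_z g) < / (2 * IZR D ^ 2) ->
  h = g.
Proof.
  intros [m [C [Htg [[A [B [Hxg Hyg]]] Hzg]]]] [m' [C' [Hth [[A' [B' [Hxh Hyh]]] Hzh]]]].
  intros Dt Dim Dre Dz.
  assert (HD : 0 < IZR D) by (apply IZR_lt; lia).
  unfold lat_re, lat_im in *.
  assert (Em : m' = m).
  { apply (IZR_eq_of_close _ _ (Rabs lam)); [pose proof (Rabs_pos (o_t h - o_t g)); lra|].
    rewrite Rabs_mult, Rabs_Rabsolu, <- Rabs_mult.
    replace ((IZR m' - IZR m) * lam) with (o_t h - o_t g) by (rewrite Hth, Htg; ring). lra. }
  assert (EB : B' = B).
  { apply (IZR_eq_of_close _ _ (s / IZR D)); [apply Rdiv_lt_0_compat; lra|].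
    replace ((IZR B' - IZR B) * (s / IZR D)) with (o_im h - o_im g); [lra|].
    apply (Rmult_eq_reg_l (IZR D)); [|lra]. rewrite Rmult_minus_distr_l, Hyh, Hyg. field. lra. }
  subst m' B'.
  assert (EA : A' = A).
  { apply (IZR_eq_of_close _ _ (/ (IZR D * s))); [apply Rinv_0_lt_compat; nra|].
    replace ((IZR A' - IZR A) * / (IZR D * s)) with (o_re h - o_re g); [lra|].
    apply (Rmult_eq_reg_l (IZR D)); [|lra]. rewrite Rmult_minus_distr_l, Hxh, Hxg. field. lra. }
  assert (EC : C' = C).
  { apply (IZR_eq_of_close _ _ (/ (2 * IZR D ^ 2))); [apply Rinv_0_lt_compat; nra|].
    replace ((IZR C' - IZR C) * / (2 * IZR D ^ 2)) with (o_z h - o_z g)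
      by (rewrite Hzh, Hzg; field; lra). lra. }
  subst A' C'. destruct g as [xg yg zg tg], h as [xh yh zh th]. cbn in *.
  f_equal; try congruence; apply (Rmult_eq_reg_l (IZR D)); lra.
Qed.

Lemma osc_grid_discrete (P : Osc -> Prop) :
  lam <> 0 -> (forall g, P g -> osc_grid D mu s lam z0 g) -> discrete P.
Proof.
  intros Hlam HP g Pg.
  assert (HD : 0 < IZR D) by (apply IZR_lt; lia).
  pose proof (Rabs_pos_lt lam Hlam).
  set (e1 := Rmin (Rabs lam) (s / IZR D)).
  set (e2 := Rmin (/ (IZR D * s)) (/ (2 * IZR D ^ 2))).
  exists (Rmin e1 e2). split.
  { apply Rmin_pos; apply Rmin_pos;
      [lra | apply Rdiv_lt_0_compat | apply Rinv_0_lt_compat | apply Rinv_0_lt_compat]; nra. }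
  intros h Ph Hd.
  destruct (Rabs_le_osc_dist g h) as [Hre [Him [Hz Ht]]].
  pose proof (Rmin_l e1 e2); pose proof (Rmin_r e1 e2).
  pose proof (Rmin_l (Rabs lam) (s / IZR D)); pose proof (Rmin_r (Rabs lam) (s / IZR D)).
  pose proof (Rmin_l (/ (IZR D * s)) (/ (2 * IZR D ^ 2))).
  pose proof (Rmin_r (/ (IZR D * s)) (/ (2 * IZR D ^ 2))).
  unfold e1, e2 in *. apply osc_grid_eq; auto; lra.
Qed.

End Grid.

Lemma gen_by_Z_orbit (S : list Osc) (g0 : Osc) (P : Z -> Osc -> Prop) :
  List.In g0 S -> P 0%Z osc_one ->
  (forall k g, P k g -> P (Z.succ k) (osc_mul g g0)) ->
  (forall k g, P k g -> P (Z.pred k) (osc_mul g (osc_inv g0))) ->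
  forall k, exists g, gen_by S g /\ P k g.
Proof.
  intros Hin H0 Hsucc Hpred k. induction k as [|k [g [G Pg]]|k [g [G Pg]]] using Z.peano_ind.
  - exists osc_one. split; [apply gen_one | exact H0].
  - exists (osc_mul g g0). split; [apply gen_mul; [exact G | now apply gen_base] | auto].
  - exists (osc_mul g (osc_inv g0)).
    split; [apply gen_mul; [exact G | now apply gen_inv, gen_base] | auto].
Qed.

Lemma gen_by_family (S : list Osc) (g0 : Osc) (f : Z -> Osc) :
  List.In g0 S -> f 0%Z = osc_one -> (forall k, f (Z.succ k) = osc_mul (f k) g0) ->
  forall k, gen_by S (f k).
Proof.
  intros Hin H0 Hsucc k.
  destruct (gen_by_Z_orbit S g0 (fun k g => g = f k) Hin) with k as [g [G ->]]; auto.
  - intros j g ->. now rewrite Hsucc.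
  - intros j g ->. rewrite <- (Z.succ_pred j) at 1. now rewrite Hsucc, osc_mulK.
Qed.

Lemma cocompact_of_reduction (Gamma : Osc -> Prop) (M : R) :
  (forall g, Gamma g -> Gamma (osc_inv g)) ->
  (forall g, exists gam, Gamma gam /\ osc_dist (osc_mul g gam) osc_one <= M) ->
  cocompact Gamma.
Proof.
  intros Hinv Hred. exists M. intro g. destruct (Hred g) as [gam [G Hd]].
  exists (osc_mul g gam), (osc_inv gam). repeat split; auto. now rewrite osc_mulK.
Qed.

Lemma osc_dist_one_le g N :
  Rabs (o_re g) <= N -> Rabs (o_im g) <= N -> Rabs (o_z g) <= N -> Rabs (o_t g) <= N ->
  osc_dist g osc_one <= 2 * N.
Proof.
  intros Ha Hb Hc Hd. unfold osc_dist, osc_one. cbn [o_re o_im o_z o_t]. rewrite !Rminus_0_r.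
  assert (0 <= N) by (pose proof (Rabs_pos (o_re g)); lra).
  rewrite <- (sqrt_pow2 (2 * N)) by lra. apply sqrt_le_1_alt.
  rewrite <- (pow2_abs (o_re g)), <- (pow2_abs (o_im g)), <- (pow2_abs (o_z g)),
    <- (pow2_abs (o_t g)).
  pose proof (Rabs_pos (o_re g)); pose proof (Rabs_pos (o_im g)).
  pose proof (Rabs_pos (o_z g)); pose proof (Rabs_pos (o_t g)).
  nra.
Qed.

Lemma exists_Z_near c x : c <> 0 -> exists k : Z, Rabs (x + IZR k * c) <= Rabs c.
Proof.
  intro Hc. exists (- up (x / c))%Z. destruct (archimed (x / c)) as [H1 H2].
  replace (x + IZR (- up (x / c)) * c) with (- (c * (IZR (up (x / c)) - x / c)))
    by (rewrite opp_IZR; field; auto).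
  rewrite Rabs_Ropp, Rabs_mult, (Rabs_pos_eq (IZR _ - _)) by lra.
  pose proof (Rabs_pos c). nra.
Qed.

Lemma on_lattice_near mu s : 0 < s ->
  forall x y, exists A B : Z, Rabs (lat_re mu s A B - x) <= / s /\ Rabs (lat_im s B - y) <= s.
Proof.
  intros Hs x y.
  destruct (exists_Z_near s (- y)) as [B HB]; [lra|].
  destruct (exists_Z_near 1 (- (mu * IZR B + s * x))) as [A HA]; [lra|].
  exists A, B. unfold lat_re, lat_im. rewrite Rabs_R1 in HA. rewrite (Rabs_pos_eq s) in HB by lra.
  split.
  - replace ((IZR A - mu * IZR B) / s - x) with ((- (mu * IZR B + s * x) + IZR A * 1) * / s)
      by (field; lra).
    rewrite Rabs_mult, (Rabs_pos_eq (/ s)) by (left; apply Rinv_0_lt_compat; lra).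
    pose proof (Rinv_0_lt_compat s Hs). nra.
  - now replace (IZR B * s - y) with (- y + IZR B * s) by ring.
Qed.

Section Cocompact.
Variables (S : list Osc) (mu s c lam a b z : R).
Hypotheses (s_gt0 : 0 < s) (c_gt0 : 0 < c) (lam_neq0 : lam <> 0).
Hypotheses (in_l1 : List.In (mkOsc (/ s) 0 0 0) S)
           (in_l2 : List.In (mkOsc (- mu / s) s 0 0) S)
           (in_l3 : List.In (mkOsc 0 0 c 0) S)
           (in_l4 : List.In (mkOsc a b z lam) S).

Lemma reduce_t g : exists gam, gen_by S gam /\ Rabs (o_t (osc_mul g gam)) <= Rabs lam.
Proof.
  destruct (exists_Z_near lam (o_t g) lam_neq0) as [k Hk].
  destruct (gen_by_Z_orbit S _ (fun k g => o_t g = IZR k * lam) in_l4) with k as [gam [G Ht]].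
  - cbn. ring.
  - intros j h Hj. cbn. rewrite Hj, succ_IZR. ring.
  - intros j h Hj. cbn. rewrite Hj, <- Z.sub_1_r, minus_IZR. ring.
  - exists gam. split; auto. cbn [osc_mul o_t]. now rewrite Ht.
Qed.

Lemma gen_by_lattice A B : exists gam, gen_by S gam /\
  o_t gam = 0 /\ o_re gam = lat_re mu s A B /\ o_im gam = lat_im s B.
Proof.
  assert (G1 : forall k, gen_by S (mkOsc (IZR k / s) 0 0 0)).
  { apply (gen_by_family S _ (fun k => mkOsc (IZR k / s) 0 0 0) in_l1); [|intro k];
      unfold osc_mul, osc_one, rot_re, rot_im; cbn; rewrite ?succ_IZR, ?cos_0, ?sin_0;
      f_equal; field; lra. }
  assert (G2 : forall k, gen_by S (mkOsc (- mu * IZR k / s) (IZR k * s) 0 0)).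
  { apply (gen_by_family S _ (fun k => mkOsc (- mu * IZR k / s) (IZR k * s) 0 0) in_l2); [|intro k];
      unfold osc_mul, osc_one, rot_re, rot_im; cbn; rewrite ?succ_IZR, ?cos_0, ?sin_0;
      f_equal; field; lra. }
  exists (osc_mul (mkOsc (IZR A / s) 0 0 0) (mkOsc (- mu * IZR B / s) (IZR B * s) 0 0)).
  split; [now apply gen_mul|].
  unfold lat_re, lat_im, osc_mul, rot_re, rot_im; cbn. rewrite cos_0, sin_0.
  repeat split; [ring | field; lra | ring].
Qed.

Lemma reduce_xi g : exists gam, gen_by S gam /\ o_t (osc_mul g gam) = o_t g /\
  Rabs (o_re (osc_mul g gam)) <= / s + s /\ Rabs (o_im (osc_mul g gam)) <= / s + s.
Proof.
  (* With [w = - e^{-it} xi] and a lattice point [l] near [w],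
     [xi + e^{it} l = e^{it} (l - w)] is small. *)
  set (t := o_t g).
  set (wr := rot_re (- t) (- o_re g) (- o_im g)).
  set (wi := rot_im (- t) (- o_re g) (- o_im g)).
  assert (Ewr : rot_re t wr wi = - o_re g)
    by (unfold wr, wi; now rewrite <- rot_re_plus, Rplus_opp_r, rot_re_0).
  assert (Ewi : rot_im t wr wi = - o_im g)
    by (unfold wr, wi; now rewrite <- rot_im_plus, Rplus_opp_r, rot_im_0).
  destruct (on_lattice_near mu s s_gt0 wr wi) as [A [B [HA HB]]].
  destruct (gen_by_lattice A B) as [gam [G [Ht [Hre Him]]]].
  exists gam. cbn [osc_mul o_t o_re o_im]. fold t. rewrite Ht, Hre, Him.
  assert (Hre' : o_re g + rot_re t (lat_re mu s A B) (lat_im s B)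
                 = rot_re t (lat_re mu s A B - wr) (lat_im s B - wi))
    by (rewrite <- (Ropp_involutive (o_re g)), <- Ewr; unfold rot_re; ring).
  assert (Him' : o_im g + rot_im t (lat_re mu s A B) (lat_im s B)
                 = rot_im t (lat_re mu s A B - wr) (lat_im s B - wi))
    by (rewrite <- (Ropp_involutive (o_im g)), <- Ewi; unfold rot_im; ring).
  rewrite Hre', Him'. repeat split; [exact G | ring | |].
  - eapply Rle_trans; [apply Rabs_rot_re_le | lra].
  - eapply Rle_trans; [apply Rabs_rot_im_le | lra].
Qed.

Lemma reduce_z g : exists gam, gen_by S gam /\
  o_re (osc_mul g gam) = o_re g /\ o_im (osc_mul g gam) = o_im g /\
  o_t (osc_mul g gam) = o_t g /\ Rabs (o_z (osc_mul g gam)) <= c.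
Proof.
  assert (G : forall k, gen_by S (mkOsc 0 0 (IZR k * c) 0)).
  { apply (gen_by_family S _ (fun k => mkOsc 0 0 (IZR k * c) 0) in_l3); [|intro k];
      unfold osc_mul, osc_one, rot_re, rot_im; cbn; rewrite ?succ_IZR, ?cos_0, ?sin_0;
      f_equal; ring. }
  destruct (exists_Z_near c (o_z g)) as [k Hk]; [lra|].
  rewrite (Rabs_pos_eq c) in Hk by lra.
  exists (mkOsc 0 0 (IZR k * c) 0). split; [apply G|].
  unfold osc_mul, rot_re, rot_im; cbn.
  repeat split; try ring.
  now replace (o_z g + IZR k * c + / 2 * (o_re g * (sin (o_t g) * 0 + cos (o_t g) * 0)
    - o_im g * (cos (o_t g) * 0 - sin (o_t g) * 0))) with (o_z g + IZR k * c) by ring.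
Qed.

Lemma gen_by_cocompact : cocompact (gen_by S).
Proof.
  apply (cocompact_of_reduction _ (2 * (Rabs lam + (/ s + s) + c))); [intros; now apply gen_inv|].
  intro g.
  destruct (reduce_t g) as [g1 [G1 H1]].
  destruct (reduce_xi (osc_mul g g1)) as [g2 [G2 [E2 [H2re H2im]]]].
  destruct (reduce_z (osc_mul (osc_mul g g1) g2)) as [g3 [G3 [E3re [E3im [E3t H3]]]]].
  exists (osc_mul g1 (osc_mul g2 g3)). split; [now repeat apply gen_mul|].
  rewrite <- !osc_mul_assoc.
  pose proof (Rabs_pos lam). pose proof (Rinv_0_lt_compat s s_gt0).
  apply osc_dist_one_le; rewrite ?E3re, ?E3im, ?E3t, ?E2; lra.
Qed.

End Cocompact.

Lemma osc_lattice_criterion (r : nat) (lam mu nu x0 y0 z : R) :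
  (0 < r)%nat -> 0 < nu -> lam <> 0 ->
  rot_stable mu (sqrt nu) lam -> rot_stable mu (sqrt nu) (- lam) ->
  in_frac_Z (2 * r) x0 -> in_frac_Z (2 * r) y0 ->
  is_lattice (gen_by
    (mkOsc (/ sqrt nu) 0 0 0 ::
     mkOsc (- mu / sqrt nu) (sqrt nu) 0 0 ::
     mkOsc 0 0 (/ INR r) 0 ::
     mkOsc (x0 / sqrt nu - mu * y0 / sqrt nu) (sqrt nu * y0) z lam :: nil)).
Proof.
  intros Hr Hnu Hlam Hrot Hrot' [Ax ->] [By ->].
  assert (Hs : 0 < sqrt nu) by (apply sqrt_lt_R0; lra).
  assert (HrR : 0 < INR r) by (apply lt_0_INR; lia).
  assert (HD : IZR (Z.of_nat (2 * r)) = 2 * INR r) by (rewrite <- INR_IZR_INZ, mult_INR; auto).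
  replace (INR (2 * r)) with (2 * INR r) by (rewrite mult_INR; reflexivity). split.
  - apply (osc_grid_discrete (Z.of_nat (2 * r)) mu (sqrt nu) lam z); auto; [lia|].
    apply gen_by_osc_grid; [lia | lra | now apply rot_stable_Zmul |].
    intros g Hin. unfold osc_grid. rewrite HD.
    destruct Hin as [<- | [<- | [<- | [<- | []]]]]; cbn [o_t o_re o_im o_z].
    + exists 0%Z, 0%Z. split; [ring|]. split; [|field; lra].
      exists (Z.of_nat (2 * r)), 0%Z. unfold lat_re, lat_im. rewrite HD. split; field; lra.
    + exists 0%Z, 0%Z. split; [ring|]. split; [|field; lra].
      exists 0%Z, (Z.of_nat (2 * r)). unfold lat_re, lat_im. rewrite HD. split; field; lra.
    + exists 0%Z, (Z.of_nat (8 * r)). split; [ring|]. split.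
      * exists 0%Z, 0%Z. unfold lat_re, lat_im. split; field; lra.
      * rewrite <- INR_IZR_INZ, mult_INR. cbn [INR]. field; lra.
    + exists 1%Z, 0%Z. split; [ring|]. split; [|field; lra].
      exists Ax, By. unfold lat_re, lat_im. split; field; lra.
  - apply (gen_by_cocompact _ mu (sqrt nu) (/ INR r) lam
             ((IZR Ax / (2 * INR r)) / sqrt nu - mu * (IZR By / (2 * INR r)) / sqrt nu)
             (sqrt nu * (IZR By / (2 * INR r))) z); cbn; auto.
    apply Rinv_0_lt_compat; lra.
Qed.

Lemma in_frac_Z_double r q : (0 < r)%nat -> in_frac_Z r q -> in_frac_Z (2 * r) q.
Proof.
  intros Hr [a ->]. assert (0 < INR r) by (apply lt_0_INR; lia).
  exists (2 * a)%Z. rewrite mult_IZR, mult_INR. cbn [INR]. field. lra.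
Qed.

Lemma in_frac_Z_half_double r q : (0 < r)%nat -> in_frac_Z r (q - / 2) -> in_frac_Z (2 * r) q.
Proof.
  intros Hr [a Ha]. assert (0 < INR r) by (apply lt_0_INR; lia).
  exists (2 * a + Z.of_nat r)%Z. rewrite plus_IZR, mult_IZR, <- INR_IZR_INZ, mult_INR.
  replace q with (q - / 2 + / 2) by ring. rewrite Ha. cbn [INR]. field. lra.
Qed.

Lemma cos_period_Z x k : cos (x + 2 * PI * IZR k) = cos x.
Proof.
  destruct k as [|p|p].
  - now rewrite Rmult_0_r, Rplus_0_r.
  - rewrite <- (positive_nat_Z p), <- INR_IZR_INZ, <- (cos_period x (Pos.to_nat p)).
    f_equal. ring.
  - rewrite <- Pos2Z.opp_pos, opp_IZR, <- (positive_nat_Z p), <- INR_IZR_INZ.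
    rewrite <- (cos_period _ (Pos.to_nat p)). f_equal. ring.
Qed.

Lemma sin_PI_mult n : sin (PI * INR n) = 0.
Proof. apply sin_eq_0_1. exists (Z.of_nat n). rewrite <- INR_IZR_INZ. ring. Qed.

Theorem lemma4p13 (r : nat) (lam mu nu x0 y0 : R) :
  (0 < r)%nat ->
  ( (exists n : nat, (0 < n)%nat /\ lam = PI * INR n /\
        nu > 0 /\ in_frac_Z r x0 /\ in_frac_Z r y0)
  \/ (exists k : Z, lam = PI / 2 + 2 * PI * IZR k /\
        mu = 0 /\ nu = 1 /\ in_frac_Z r x0 /\ in_frac_Z r y0)
  \/ (exists k : Z, lam = PI / 3 + 2 * PI * IZR k /\
        mu = cos (PI / 3) /\ nu = sin (PI / 3) /\
        in_frac_Z r (x0 - / 2) /\ in_frac_Z r y0)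
  \/ (exists k : Z, lam = 2 * PI / 3 + 2 * PI * IZR k /\
        mu = cos (PI / 3) /\ nu = sin (PI / 3) /\
        in_frac_Z r x0 /\ in_frac_Z r (y0 - / 2)) ) ->
  forall z : R,
    is_lattice (gen_by
      (mkOsc (/ sqrt nu) 0 0 0 ::
       mkOsc (- mu / sqrt nu) (sqrt nu) 0 0 ::
       mkOsc 0 0 (/ INR r) 0 ::
       mkOsc (x0 / sqrt nu - mu * y0 / sqrt nu) (sqrt nu * y0) z lam :: nil)).
Proof.
  intros Hr Hcase z.
  assert (Hsin3 : 0 < sin (PI / 3))
    by (rewrite sin_PI3; apply Rdiv_lt_0_compat; [apply sqrt_lt_R0|]; lra).
  destruct Hcase as [[n [Hn [-> [Hnu [Hx Hy]]]]] | [[k [-> [-> [-> [Hx Hy]]]]]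
    | [[k [-> [-> [-> [Hx Hy]]]]] | [k [-> [-> [-> [Hx Hy]]]]]]]].
  - assert (Hs : sqrt nu <> 0) by (apply Rgt_not_eq, sqrt_lt_R0; lra).
    apply osc_lattice_criterion; auto using in_frac_Z_double.
    + pose proof PI_RGT_0. assert (0 < INR n) by (apply lt_0_INR; lia). nra.
    + apply rot_stable_sin_eq_0; auto using sin_PI_mult.
    + apply rot_stable_sin_eq_0; auto. now rewrite sin_neg, sin_PI_mult, Ropp_0.
  - pose proof (cos_period_Z (PI / 2) k) as Hc. rewrite cos_PI2 in Hc.
    apply osc_lattice_criterion; auto using in_frac_Z_double; rewrite ?sqrt_1; try lra.
    + intro H0. rewrite H0, cos_0 in Hc. lra.
    + now apply rot_stable_square.
    + apply rot_stable_square. now rewrite cos_neg.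
  - pose proof (cos_period_Z (PI / 3) k) as Hc. rewrite cos_PI3 in Hc.
    apply osc_lattice_criterion; auto using in_frac_Z_double, in_frac_Z_half_double.
    + intro H0. rewrite H0, cos_0 in Hc. lra.
    + apply rot_stable_hex. lra.
    + apply rot_stable_hex. rewrite cos_neg. lra.
  - pose proof (cos_period_Z (2 * (PI / 3)) k) as Hc. rewrite cos_2PI3 in Hc.
    replace (2 * PI / 3) with (2 * (PI / 3)) by field.
    apply osc_lattice_criterion; auto using in_frac_Z_double, in_frac_Z_half_double.
    + intro H0. rewrite H0, cos_0 in Hc. lra.
    + apply rot_stable_hex. lra.
    + apply rot_stable_hex. rewrite cos_neg. lra.
Qed.
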